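(* Let $\mathcal K$ be a category with equalizers and coequalizers, $\mathbb T=(T,m,u)$ a monad on $\mathcal K$ such that $T$ preserves coequalizers, $\mathbb G=(G,\Delta,\varepsilon)$ a comonad on $\mathcal K_{\mathbb T}$, and $g:U_{\mathbb T}\to U_{\mathbb T}G$ a right $\mathbb G$-coaction. Let $\mathbb B$ be the coinvariant monad with its inclusion monad morphism $\beta:\mathbb B\to\mathbb T$, and $(N_B,R_B)$ the adjunction associated to $\beta$ (with $R_B:\mathcal K_{\mathbb T}\to\mathcal K_{\mathbb B}$ the restriction along $\beta$ and $N_B$ its left adjoint). Then $N_B$ admits the structure of a left $\mathbb G$-comodule functor, with coaction $\bar h:N_B\to GN_B$ uniquely determined by $\bar h\circ\chi^B=(G\chi^B)\circ(\bar gU_{\mathbb B})$, where $\chi^B:F_{\mathbb T}U_{\mathbb B}\to N_B$ is the canonical coequalizer defining $N_B$ and $\bar g=(\lambda^TGF_{\mathbb T})\circ(F_{\mathbb T}gF_{\mathbb T})\circ(F_{\mathbb T}u)$.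
   Context: $\mathcal K_{\mathbb T}$ is the category of $\mathbb T$-modules, $U_{\mathbb T}$ the forgetful and $F_{\mathbb T}$ the free functor, $\lambda^T:F_{\mathbb T}U_{\mathbb T}\to\mathcal K_{\mathbb T}$ the counit (given by the actions). A right $\mathbb G$-coaction on $U_{\mathbb T}$ is $g:U_{\mathbb T}\to U_{\mathbb T}G$ with $(U_{\mathbb T}\varepsilon)\circ g=U_{\mathbb T}$, $(U_{\mathbb T}\Delta)\circ g=(gG)\circ g$. The coinvariant monad $\mathbb B=\mathbb T^{Co(G,g)}$ is the monad on the equalizer $(B,\beta)$ of $gF_{\mathbb T}$ and $U_{\mathbb T}\bar g$ (both $T\to U_{\mathbb T}GF_{\mathbb T}$), with the unique monad structure making $\beta:B\to T$ a monad morphism. For $(Y,y)\in\mathcal K_{\mathbb B}$, $N_B(Y,y)$ is the coequalizer $\chi^B$ in $\mathcal K_{\mathbb T}$ of the two maps $F_{\mathbb T}BY\to F_{\mathbb T}Y$ given by $\lambda^T F_{\mathbb T}Y\circ F_{\mathbb T}\beta Y$ and $F_{\mathbb T}y$. A left $\mathbb G$-comodule functor is $(L,l)$ with $l:L\to GL$, $(\varepsilon L)\circ l=L$, $(\Delta L)\circ l=(Gl)\circ l$. *)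

From Stdlib Require Import ProofIrrelevance.

Set Implicit Arguments.
Unset Strict Implicit.

Record Category := {
  Ob :> Type;
  Hom : Ob -> Ob -> Type;
  idm : forall a, Hom a a;
  comp : forall a b c, Hom b c -> Hom a b -> Hom a c;
  comp_id_l : forall a b (f : Hom a b), comp (idm b) f = f;
  comp_id_r : forall a b (f : Hom a b), comp f (idm a) = f;
  comp_assoc : forall a b c d (h : Hom c d) (g : Hom b c) (f : Hom a b),
      comp h (comp g f) = comp (comp h g) f }.

Arguments Hom {C} : rename.
Arguments idm {C} a : rename.
Arguments comp {C a b c} : rename.
Notation "g ∘ f" := (comp g f) (at level 40, left associativity).

Record Functor (C D : Category) := {
  fobj :> C -> D;
  fmap : forall a b, Hom a b -> Hom (fobj a) (fobj b);
  fmap_id : forall a, fmap (idm a) = idm (fobj a);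
  fmap_comp : forall a b c (g : Hom b c) (f : Hom a b),
      fmap (g ∘ f) = fmap g ∘ fmap f }.
Arguments fmap {C D} F {a b} : rename.

Record Monad (C : Category) := {
  mT :> Functor C C;
  unit : forall X : C, Hom X (mT X);
  mult : forall X : C, Hom (mT (mT X)) (mT X);
  unit_nat : forall X Y (f : Hom X Y), fmap mT f ∘ unit X = unit Y ∘ f;
  mult_nat : forall X Y (f : Hom X Y),
      fmap mT f ∘ mult X = mult Y ∘ fmap mT (fmap mT f);
  mult_assoc : forall X, mult X ∘ fmap mT (mult X) = mult X ∘ mult (mT X);
  mult_unit_l : forall X, mult X ∘ unit (mT X) = idm (mT X);
  mult_unit_r : forall X, mult X ∘ fmap mT (unit X) = idm (mT X) }.
Arguments unit {C} T X : rename.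
Arguments mult {C} T X : rename.

Record Comonad (C : Category) := {
  cG :> Functor C C;
  counit : forall X : C, Hom (cG X) X;
  comult : forall X : C, Hom (cG X) (cG (cG X));
  counit_nat : forall X Y (f : Hom X Y), f ∘ counit X = counit Y ∘ fmap cG f;
  comult_nat : forall X Y (f : Hom X Y),
      fmap cG (fmap cG f) ∘ comult X = comult Y ∘ fmap cG f;
  comult_coassoc : forall X,
      fmap cG (comult X) ∘ comult X = comult (cG X) ∘ comult X;
  counit_comult_l : forall X, counit (cG X) ∘ comult X = idm (cG X);
  counit_comult_r : forall X, fmap cG (counit X) ∘ comult X = idm (cG X) }.
Arguments counit {C} G X : rename.
Arguments comult {C} G X : rename.

Section EM.
Variables (C : Category) (T : Monad C).

Record Algebra := {
  carrier : C;
  act : Hom (T carrier) carrier;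
  act_unit : act ∘ unit T carrier = idm carrier;
  act_mult : act ∘ fmap T act = act ∘ mult T carrier }.

Record AlgHom (A B : Algebra) := {
  ahom :> Hom (carrier A) (carrier B);
  ahom_comm : ahom ∘ act A = act B ∘ fmap T ahom }.

Lemma AlgHom_eq (A B : Algebra) (f g : AlgHom A B) :
  ahom f = ahom g -> f = g.
Proof.
  destruct f as [f pf], g as [g pg]; simpl; intros ->.
  f_equal; apply proof_irrelevance.
Qed.

Program Definition alg_id (A : Algebra) : AlgHom A A :=
  {| ahom := idm (carrier A) |}.
Next Obligation. intros A; simpl; rewrite fmap_id, comp_id_l, comp_id_r; reflexivity. Qed.

Program Definition alg_comp (A B D : Algebra) (g : AlgHom B D) (f : AlgHom A B)
  : AlgHom A D := {| ahom := ahom g ∘ ahom f |}.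
Next Obligation.
  intros A B D g f; simpl.
  rewrite fmap_comp, <- comp_assoc, (ahom_comm f), comp_assoc, (ahom_comm g).
  now rewrite comp_assoc.
Qed.

Program Definition EMcat : Category :=
  {| Ob := Algebra; Hom := AlgHom; idm := alg_id; comp := alg_comp |}.
Next Obligation. intros; apply AlgHom_eq; simpl; apply comp_id_l. Qed.
Next Obligation. intros; apply AlgHom_eq; simpl; apply comp_id_r. Qed.
Next Obligation. intros; apply AlgHom_eq; simpl; apply comp_assoc. Qed.

Program Definition Forget : Functor EMcat C :=
  {| fobj := carrier; fmap := fun A B f => ahom f |}.
Next Obligation. reflexivity. Qed.
Next Obligation. reflexivity. Qed.

Program Definition free_alg (X : C) : Algebra :=
  {| carrier := T X; act := mult T X |}.
Next Obligation. intros; apply mult_unit_l. Qed.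
Next Obligation. intros; apply mult_assoc. Qed.

Program Definition free_hom (X Y : C) (f : Hom X Y)
  : AlgHom (free_alg X) (free_alg Y) := {| ahom := fmap T f |}.
Next Obligation. intros; apply mult_nat. Qed.

Program Definition Free : Functor C EMcat :=
  {| fobj := free_alg; fmap := free_hom |}.
Next Obligation. intros; apply AlgHom_eq; simpl; apply fmap_id. Qed.
Next Obligation. intros; apply AlgHom_eq; simpl; apply fmap_comp. Qed.

Program Definition lambdaT (A : Algebra) : AlgHom (free_alg (carrier A)) A :=
  {| ahom := act A |}.
Next Obligation. intros; symmetry; apply act_mult. Qed.

End EM.

Arguments Forget {C} T.
Arguments Free {C} T.
Arguments lambdaT {C T} A.

Definition IsEqualizer (C : Category) (E A B : C) (e : Hom E A) (f1 f2 : Hom A B)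
  : Prop :=
  f1 ∘ e = f2 ∘ e /\
  forall (Z : C) (h : Hom Z A), f1 ∘ h = f2 ∘ h ->
    exists! k : Hom Z E, e ∘ k = h.

Definition IsCoequalizer (C : Category) (A B Q : C) (f1 f2 : Hom A B) (q : Hom B Q)
  : Prop :=
  q ∘ f1 = q ∘ f2 /\
  forall (Z : C) (h : Hom B Z), h ∘ f1 = h ∘ f2 ->
    exists! k : Hom Q Z, k ∘ q = h.

Definition HasEqualizers (C : Category) : Prop :=
  forall (A B : C) (f1 f2 : Hom A B),
    exists (E : C) (e : Hom E A), IsEqualizer e f1 f2.

Definition HasCoequalizers (C : Category) : Prop :=
  forall (A B : C) (f1 f2 : Hom A B),
    exists (Q : C) (q : Hom B Q), IsCoequalizer f1 f2 q.

Definition PreservesCoequalizers (C D : Category) (F : Functor C D) : Prop :=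
  forall (A B Q : C) (f1 f2 : Hom A B) (q : Hom B Q),
    IsCoequalizer f1 f2 q -> IsCoequalizer (fmap F f1) (fmap F f2) (fmap F q).

Definition IsRightCoaction (C : Category) (T : Monad C) (G : Comonad (EMcat T))
  (g : forall A : EMcat T, Hom (Forget T A) (Forget T (G A))) : Prop :=
  (forall (A B : EMcat T) (f : Hom A B),
      fmap (Forget T) (fmap G f) ∘ g A = g B ∘ fmap (Forget T) f) /\
  (forall A, fmap (Forget T) (counit G A) ∘ g A = idm (Forget T A)) /\
  (forall A, fmap (Forget T) (comult G A) ∘ g A = g (G A) ∘ g A).

Definition gbar (C : Category) (T : Monad C) (G : Comonad (EMcat T))
  (g : forall A : EMcat T, Hom (Forget T A) (Forget T (G A))) (X : C)
  : Hom (Free T X) (G (Free T X)) :=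
  @comp (EMcat T) _ _ _
    (@comp (EMcat T) _ _ _ (lambdaT (G (Free T X))) (fmap (Free T) (g (Free T X))))
    (fmap (Free T) (unit T X)).

Definition IsMonadMorphism (C : Category) (B T : Monad C)
  (beta : forall X : C, Hom (B X) (T X)) : Prop :=
  (forall X Y (f : Hom X Y), fmap T f ∘ beta X = beta Y ∘ fmap B f) /\
  (forall X, beta X ∘ unit B X = unit T X) /\
  (forall X, beta X ∘ mult B X = mult T X ∘ fmap T (beta X) ∘ beta (B X)).

Definition IsCoinvariantMonad (C : Category) (T : Monad C) (G : Comonad (EMcat T))
  (g : forall A : EMcat T, Hom (Forget T A) (Forget T (G A)))
  (B : Monad C) (beta : forall X : C, Hom (B X) (T X)) : Prop :=
  IsMonadMorphism beta /\
  forall X : C,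
    IsEqualizer (beta X) (g (Free T X)) (fmap (Forget T) (gbar g X)).

Definition IsLeftComoduleFunctor (D E : Category) (G : Comonad E) (L : Functor D E)
  (l : forall Y : D, Hom (L Y) (G (L Y))) : Prop :=
  (forall (Y Y' : D) (f : Hom Y Y'), fmap G (fmap L f) ∘ l Y = l Y' ∘ fmap L f) /\
  (forall Y, counit G (L Y) ∘ l Y = idm (L Y)) /\
  (forall Y, comult G (L Y) ∘ l Y = fmap G (l Y) ∘ l Y).

Definition NB_pair1 (C : Category) (T B : Monad C)
  (beta : forall X : C, Hom (B X) (T X)) (Y : EMcat B)
  : Hom (Free T (B (carrier Y))) (Free T (carrier Y)) :=
  @comp (EMcat T) _ _ _ (lambdaT (Free T (carrier Y))) (fmap (Free T) (beta (carrier Y))).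

Definition NB_pair2 (C : Category) (T B : Monad C) (Y : EMcat B)
  : Hom (Free T (B (carrier Y))) (Free T (carrier Y)) :=
  fmap (Free T) (act Y).

Definition IsNB (C : Category) (T B : Monad C) (beta : forall X : C, Hom (B X) (T X))
  (N : Functor (EMcat B) (EMcat T))
  (chi : forall Y : EMcat B, Hom (Free T (Forget B Y)) (N Y)) : Prop :=
  (forall (Y Y' : EMcat B) (f : Hom Y Y'),
      fmap N f ∘ chi Y = chi Y' ∘ fmap (Free T) (fmap (Forget B) f)) /\
  (forall Y : EMcat B, IsCoequalizer (NB_pair1 beta Y) (NB_pair2 T Y) (chi Y)).

(* The coaction g induces a left G-coaction gbar on the free functor F_T,
   since an algebra map out of a free algebra is determined by its restriction
   along the unit, where gbar restricts to g.  Composed with G chi^B, gbar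
   coequalizes the pair defining N_B: restricted along the unit, the first map
   of the pair is beta, on which g F_T and U_T gbar agree by the definition of
   the coinvariant monad.  Hence gbar descends to N_B, and the comodule laws
   descend with it because chi^B is epi. *)
From Stdlib Require Import ClassicalEpsilon ssreflect.

Set Implicit Arguments.
Unset Strict Implicit.

Definition Epi (C : Category) (A B : C) (q : Hom A B) : Prop :=
  forall (Z : C) (a b : Hom B Z), a ∘ q = b ∘ q -> a = b.

Lemma coequalizer_epi (C : Category) (A B Q : C) (f1 f2 : Hom A B) (q : Hom B Q) :
  IsCoequalizer f1 f2 q -> Epi q.
Proof.
  move=> [q_coeq q_univ] Z a b ab.
  have aq_coeq : (a ∘ q) ∘ f1 = (a ∘ q) ∘ f2 by rewrite -!comp_assoc q_coeq.
  have [k [_ k_uniq]] := q_univ Z _ aq_coeq.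
  by rewrite -(k_uniq a) // (k_uniq b).
Qed.

Program Definition functor_comp (C D E : Category) (F : Functor C D) (H : Functor D E)
  : Functor C E := {| fobj := fun a => H (F a); fmap := fun a b f => fmap H (fmap F f) |}.
Next Obligation. by move=> *; rewrite !fmap_id. Qed.
Next Obligation. by move=> *; rewrite !fmap_comp. Qed.

Lemma comodule_functor_comp (C D E : Category) (G : Comonad E)
  (F : Functor C D) (L : Functor D E) (l : forall Y : D, Hom (L Y) (G (L Y))) :
  IsLeftComoduleFunctor l ->
  IsLeftComoduleFunctor (L := functor_comp F L) (fun Y => l (F Y)).
Proof. by move=> [l_nat [l_counit l_comult]]; split; [|split] => *; cbn. Qed.

Section ComoduleQuotient.
Variables (D E : Category) (G : Comonad E) (L N : Functor D E)
  (l : forall Y : D, Hom (L Y) (G (L Y))) (q : forall Y : D, Hom (L Y) (N Y))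
  (n : forall Y : D, Hom (N Y) (G (N Y))).
Hypothesis l_comodule : IsLeftComoduleFunctor l.
Hypothesis q_nat : forall (Y Y' : D) (f : Hom Y Y'), fmap N f ∘ q Y = q Y' ∘ fmap L f.
Hypothesis q_epi : forall Y : D, Epi (q Y).
Hypothesis n_q : forall Y : D, n Y ∘ q Y = fmap G (q Y) ∘ l Y.

Lemma comodule_quotient : IsLeftComoduleFunctor n.
Proof.
  have [l_nat [l_counit l_comult]] := l_comodule.
  split; [|split] => [Y Y' f|Y|Y]; apply: q_epi.
  - rewrite -!comp_assoc n_q q_nat !comp_assoc n_q -fmap_comp q_nat fmap_comp.
    by rewrite -!comp_assoc l_nat.
  - rewrite -comp_assoc n_q comp_assoc -counit_nat -comp_assoc l_counit.
    by rewrite comp_id_l comp_id_r.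
  - rewrite -!comp_assoc n_q comp_assoc -comult_nat -comp_assoc l_comult.
    by rewrite !comp_assoc -(fmap_comp G (n Y)) n_q fmap_comp.
Qed.

End ComoduleQuotient.

Section FreeAlgebras.
Variables (K : Category) (T : Monad K).

Lemma free_hom_ext (X : K) (A : EMcat T) (a b : Hom (Free T X) A) :
  ahom a ∘ unit T X = ahom b ∘ unit T X -> a = b.
Proof.
  have free_form (c : Hom (Free T X) A) : ahom c = act A ∘ fmap T (ahom c ∘ unit T X).
    by rewrite fmap_comp comp_assoc -(ahom_comm c) -comp_assoc mult_unit_r comp_id_r.
  by move=> ab; apply: AlgHom_eq; rewrite (free_form a) (free_form b) ab.
Qed.

Lemma ahom_comp (A B D : EMcat T) (f : Hom B D) (h : Hom A B) :
  ahom (f ∘ h) = ahom f ∘ ahom h.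
Proof. by []. Qed.

Lemma act_fmap_unit (X : K) (A : EMcat T) (h : Hom X (carrier A)) :
  act A ∘ fmap T h ∘ unit T X = h.
Proof. by rewrite -comp_assoc unit_nat comp_assoc act_unit comp_id_l. Qed.

Lemma NB_pair1_unit (B : Monad K) (beta : forall X : K, Hom (B X) (T X))
  (Y : EMcat B) (A : EMcat T) (q : Hom (Free T (carrier Y)) A) :
  ahom (q ∘ NB_pair1 beta Y) ∘ unit T _ = ahom q ∘ beta (carrier Y).
Proof. by cbn; rewrite -comp_assoc (act_fmap_unit (A := Free T _)). Qed.

Lemma NB_pair2_unit (B : Monad K) (Y : EMcat B) (A : EMcat T)
  (q : Hom (Free T (carrier Y)) A) :
  ahom (q ∘ NB_pair2 T Y) ∘ unit T _ = ahom q ∘ (unit T _ ∘ act Y).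
Proof. by cbn; rewrite -comp_assoc unit_nat. Qed.

End FreeAlgebras.

Section Coaction.
Variables (K : Category) (T : Monad K) (G : Comonad (EMcat T))
  (g : forall A : EMcat T, Hom (Forget T A) (Forget T (G A))).
Hypothesis g_coaction : IsRightCoaction g.

Lemma coaction_nat (A A' : EMcat T) (f : Hom A A') :
  ahom (fmap G f) ∘ g A = g A' ∘ ahom f.
Proof. exact: (proj1 g_coaction). Qed.

Lemma coaction_counit (A : EMcat T) : ahom (counit G A) ∘ g A = idm (carrier A).
Proof. exact: (proj1 (proj2 g_coaction)). Qed.

Lemma coaction_comult (A : EMcat T) : ahom (comult G A) ∘ g A = g (G A) ∘ g A.
Proof. exact: (proj2 (proj2 g_coaction)). Qed.

Lemma gbar_unit (X : K) : ahom (gbar g X) ∘ unit T X = g (Free T X) ∘ unit T X.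
Proof. by cbn; rewrite -comp_assoc unit_nat comp_assoc act_fmap_unit. Qed.

Section UnitExtension.
Variable c : forall X : K, Hom (Free T X) (G (Free T X)).
Hypothesis c_unit : forall X : K, ahom (c X) ∘ unit T X = g (Free T X) ∘ unit T X.

Lemma unit_extension_comodule : IsLeftComoduleFunctor (L := Free T) c.
Proof.
  split; [|split] => [X X' h|X|X]; apply: free_hom_ext; rewrite !ahom_comp -!comp_assoc c_unit.
  - rewrite [in LHS]comp_assoc coaction_nat -comp_assoc /=.
    by rewrite !unit_nat !comp_assoc c_unit.
  - by rewrite comp_assoc coaction_counit.
  - rewrite comp_assoc coaction_comult [in RHS]comp_assoc coaction_nat.
    by rewrite -!comp_assoc c_unit.
Qed.

Lemma unit_extension_coequalizes (B : Monad K) (beta : forall X : K, Hom (B X) (T X))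
  (Y : EMcat B) (A : EMcat T) (q : Hom (Free T (carrier Y)) A) :
  g (Free T (carrier Y)) ∘ beta (carrier Y) = ahom (c (carrier Y)) ∘ beta (carrier Y) ->
  q ∘ NB_pair1 beta Y = q ∘ NB_pair2 T Y ->
  (fmap G q ∘ c (carrier Y)) ∘ NB_pair1 beta Y = (fmap G q ∘ c (carrier Y)) ∘ NB_pair2 T Y.
Proof.
  move=> c_beta q_coeq.
  have q_beta : ahom q ∘ beta (carrier Y) = ahom q ∘ (unit T _ ∘ act Y).
    by rewrite -NB_pair1_unit q_coeq NB_pair2_unit.
  apply: free_hom_ext; rewrite NB_pair1_unit NB_pair2_unit !ahom_comp -!comp_assoc -c_beta.
  rewrite [ahom (c _) ∘ _]comp_assoc c_unit !comp_assoc !coaction_nat.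
  by rewrite -!comp_assoc q_beta.
Qed.

End UnitExtension.

End Coaction.

Theorem mainTheorem11 (K : Category) (T : Monad K) (G : Comonad (EMcat T))
  (g : forall A : EMcat T, Hom (Forget T A) (Forget T (G A)))
  (B : Monad K) (beta : forall X : K, Hom (B X) (T X))
  (N : Functor (EMcat B) (EMcat T))
  (chi : forall Y : EMcat B, Hom (Free T (Forget B Y)) (N Y)) :
  HasEqualizers K ->
  HasCoequalizers K ->
  PreservesCoequalizers T ->
  IsRightCoaction g ->
  IsCoinvariantMonad (B := B) g beta ->
  IsNB (N := N) beta chi ->
  exists hbar : forall Y : EMcat B, Hom (N Y) (G (N Y)),
    IsLeftComoduleFunctor (G := G) (L := N) hbar /\
    (forall Y, hbar Y ∘ chi Y = fmap G (chi Y) ∘ gbar g (Forget B Y)) /\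
    (forall hbar' : forall Y : EMcat B, Hom (N Y) (G (N Y)),
        (forall Y, hbar' Y ∘ chi Y = fmap G (chi Y) ∘ gbar g (Forget B Y)) ->
        forall Y, hbar' Y = hbar Y).
Proof.
  (* The (co)limit hypotheses only serve to construct B and N_B, which are given. *)
  move=> _ _ _ g_coaction [_ beta_equalizer] [chi_nat chi_coeq].
  have chi_epi (Y : EMcat B) : Epi (chi Y) := coequalizer_epi (chi_coeq Y).
  have gbar_descends (Y : EMcat B) :
    exists h, h ∘ chi Y = fmap G (chi Y) ∘ gbar g (Forget B Y).
  { have [chi_pair chi_univ] := chi_coeq Y.
    have gbar_pair := unit_extension_coequalizes g_coaction (gbar_unit g)
      (proj1 (beta_equalizer _)) chi_pair.
    by have [h [h_chi _]] := chi_univ _ _ gbar_pair; exists h. }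
  pose hbar Y := proj1_sig (constructive_indefinite_description _ (gbar_descends Y)).
  have hbar_chi Y : hbar Y ∘ chi Y = fmap G (chi Y) ∘ gbar g (Forget B Y)
    := proj2_sig (constructive_indefinite_description _ (gbar_descends Y)).
  exists hbar; split; [|split] => //.
  - apply: (comodule_quotient (L := functor_comp (Forget B) (Free T))) chi_nat chi_epi hbar_chi.
    exact: comodule_functor_comp (unit_extension_comodule g_coaction (gbar_unit g)).
  - by move=> hbar' hbar'_chi Y; apply: chi_epi; rewrite hbar_chi hbar'_chi.
Qed.
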